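(* In the absence of the UAV speed constraint (i.e. allowing arbitrary measurable trajectories $x:[0,T]\to\mathbb{R}$), for any $T>0$ the capacity region of the UAV-enabled two-user broadcast channel is $$\hat{\mathcal{C}}(\bar P)=\left\{(r_1,r_2): r_1+r_2\le\log_2\left(1+\frac{\bar P\beta_0}{H^2}\right),\ r_1\ge0,\ r_2\ge0\right\}.$$
   Context: Fix $D>0$, $H>0$, $\beta_0>0$, $\bar P>0$. Ground users GU 1, GU 2 are at horizontal positions $x_1=-D/2$, $x_2=D/2$; for UAV position $x\in\mathbb{R}$ (constant altitude $H$), $h_k(x)=\beta_0/((x-x_k)^2+H^2)$. A power allocation is a pair of measurable functions $p_1,p_2:[0,T]\to[0,\infty)$ with $p_1(t)+p_2(t)\le\bar P$. $\mathcal{C}(x,p)$ is the set of $(r_1,r_2)$, $r_1,r_2\ge0$, with $r_1\le\frac1T\int_0^T\log_2(1+p_1(t)h_1(x(t)))dt$, $r_2\le\frac1T\int_0^T\log_2(1+p_2(t)h_2(x(t)))dt$, $r_1+r_2\le\frac1T\int_0^T\log_2(1+p_1(t)h_1(x(t))+p_2(t)h_2(x(t)))dt$. The capacity region here is the union of $\mathcal{C}(x,p)$ over all such $x$ and $p$. *)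

From HB Require Import structures.
From mathcomp Require Import all_boot all_order all_algebra.
From mathcomp Require Import all_classical all_reals all_analysis.
Set Implicit Arguments. Unset Strict Implicit. Unset Printing Implicit Defensive.
Import Order.TTheory GRing.Theory Num.Theory.
Local Open Scope classical_set_scope.
Local Open Scope ring_scope.

Section Defs.
Variable R : realType.

Definition log2 (y : R) : R := ln y / ln 2.

Definition gain (beta0 H xk x : R) : R := beta0 / ((x - xk) ^+ 2 + H ^+ 2).

Definition avg_int (T : R) (f : R -> R) : \bar R :=
  let I := `[0, T]%classic in
  ((T^-1)%:E * \int[lebesgue_measure]_(t in I) (f t)%:E)%E.

Definition power_alloc (Pbar T : R) (p1 p2 : R -> R) : Prop :=
  measurable_fun `[0, T]%classic p1 /\ measurable_fun `[0, T]%classic p2 /\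
  (forall t, 0 <= t <= T -> 0 <= p1 t /\ 0 <= p2 t /\ p1 t + p2 t <= Pbar).

Definition rate_region (D H beta0 T : R) (x p1 p2 : R -> R) : set (R * R) :=
  [set r | 0 <= r.1 /\ 0 <= r.2 /\
    (r.1%:E <= avg_int T (fun t => log2 (1 + p1 t * gain beta0 H (- D / 2) (x t))))%E /\
    (r.2%:E <= avg_int T (fun t => log2 (1 + p2 t * gain beta0 H (D / 2) (x t))))%E /\
    ((r.1 + r.2)%:E <= avg_int T (fun t => log2 (1 + p1 t * gain beta0 H (- D / 2) (x t)
                                                  + p2 t * gain beta0 H (D / 2) (x t))))%E].

Definition capacity_region (D H beta0 Pbar T : R) : set (R * R) :=
  [set r | exists x p1 p2 : R -> R,
    measurable_fun `[0, T]%classic x /\ power_alloc Pbar T p1 p2 /\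
    rate_region D H beta0 T x p1 p2 r].

End Defs.

From HB Require Import structures.
From mathcomp Require Import all_boot all_order all_algebra.
From mathcomp Require Import all_classical all_reals all_analysis.
From mathcomp Require Import ring lra measurable_realfun.
Set Implicit Arguments. Unset Strict Implicit. Unset Printing Implicit Defensive.
Import Order.TTheory GRing.Theory Num.Theory.
Import numFieldNormedType.Exports.
Local Open Scope classical_set_scope.
Local Open Scope ring_scope.

(* Converse: both gains are at most [beta0 / H^2] and [p1 + p2 <= Pbar], so
   the sum-rate integrand is pointwise at most [log2 (1 + Pbar beta0 / H^2)],
   and so is its time average.  Achievability: by time sharing.  The UAV
   hovers above GU 1 and serves it with full power during [0, s), then hovers
   above GU 2 and serves it during [s, T]; this achieves the rate pair
   [(C s / T, C (T - s) / T)] with [C = log2 (1 + Pbar beta0 / H^2)], whose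
   sum is [C], and [s] ranges over [0, T].  Without a speed constraint the
   trajectory may jump from one user to the other at time [s]. *)

Section Log2.
Variable R : realType.

Lemma log2_1 : log2 (1 : R) = 0.
Proof. by rewrite /log2 ln1 mul0r. Qed.

Lemma ler_log2 (a b : R) : 0 < a -> a <= b -> log2 a <= log2 b.
Proof.
move=> a_gt0 ab; apply: ler_wpM2r; first by rewrite invr_ge0 ln_ge0 // ler1n.
by rewrite ler_ln ?posrE // (lt_le_trans a_gt0).
Qed.

Lemma log2_ge0 (a : R) : 1 <= a -> 0 <= log2 a.
Proof. by move=> a_ge1; rewrite divr_ge0 ?ln_ge0 // ler1n. Qed.

Lemma log2_gt0 (a : R) : 1 < a -> 0 < log2 a.
Proof. by move=> a_gt1; rewrite divr_gt0 ?ln_gt0 // ltr1n. Qed.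

Lemma measurable_log2 (A : set R) (f : R -> R) :
  measurable_fun A f -> measurable_fun A (fun t => log2 (f t)).
Proof.
move=> mf; apply: measurable_funM; last exact: measurable_cst.
exact: measurableT_comp mf.
Qed.

Lemma log2_sum_rate_le (P g p1 p2 g1 g2 : R) :
  0 <= p1 -> 0 <= p2 -> p1 + p2 <= P -> 0 <= g1 <= g -> 0 <= g2 <= g ->
  0 <= log2 (1 + p1 * g1 + p2 * g2) <= log2 (1 + P * g).
Proof.
move=> p1_ge0 p2_ge0 p12P /andP[g1_ge0 g1g] /andP[g2_ge0 g2g].
have q1 := mulr_ge0 p1_ge0 g1_ge0; have q2 := mulr_ge0 p2_ge0 g2_ge0.
have pg_le : p1 * g1 + p2 * g2 <= P * g.
  apply: le_trans (lerD (ler_wpM2l p1_ge0 g1g) (ler_wpM2l p2_ge0 g2g)) _.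
  by rewrite -mulrDl ler_wpM2r // (le_trans g1_ge0).
by rewrite log2_ge0 ?ler_log2 //; lra.
Qed.

End Log2.

Section Gain.
Variables (R : realType) (beta0 H xk : R).

Lemma gain_at_user : gain beta0 H xk xk = beta0 / H ^+ 2.
Proof. by rewrite /gain subrr expr0n /= add0r. Qed.

Hypothesis H_gt0 : 0 < H.

Lemma continuous_gain : continuous (gain beta0 H xk).
Proof.
move=> y; apply: cvgM; first exact: cvg_cst.
apply: cvgV; first by rewrite lt0r_neq0 // ltr_wpDl ?sqr_ge0 ?exprn_gt0.
apply: cvgD; last exact: cvg_cst.
by rewrite expr2; apply: cvgM; apply: cvgB; (exact: cvg_id || exact: cvg_cst).
Qed.

Lemma gain_bounds y : 0 <= beta0 -> 0 <= gain beta0 H xk y <= beta0 / H ^+ 2.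
Proof.
move=> beta0_ge0; have H2_gt0 : 0 < H ^+ 2 by exact: exprn_gt0.
have d_gt0 : 0 < (y - xk) ^+ 2 + H ^+ 2 by rewrite ltr_wpDl ?sqr_ge0.
rewrite divr_ge0 ?(ltW d_gt0) //= ler_wpM2l // lef_pV2 ?posrE //.
by rewrite lerDr sqr_ge0.
Qed.

End Gain.

Section TimeAverage.
Variable R : realType.
Implicit Types (T c : R) (f g : R -> R).

Lemma eq_avg_int T f g : f =1 g -> avg_int T f = avg_int T g.
Proof. by move=> /funext ->. Qed.

Lemma integral_cst_itv c (a b : R) : a <= b ->
  (\int[lebesgue_measure]_(t in `[a, b]%classic) (cst c%:E) t = (c * (b - a))%:E)%E.
Proof.
move=> ab; rewrite integral_cst //= lebesgue_measure_itv /= lte_fin.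
case: ltP => [_|ba]; first by rewrite -EFinD -EFinM.
have -> : b = a by apply/eqP; rewrite eq_le ab ba.
by rewrite subrr mulr0 mule0.
Qed.

Lemma avg_int_cst T c : 0 < T -> avg_int T (fun=> c) = c%:E.
Proof.
move=> T_gt0; rewrite /avg_int integral_cst_itv ?ltW //= -EFinM subr0.
by rewrite mulrCA mulVf ?mulr1 ?gt_eqF.
Qed.

Lemma avg_int_le_cst T c f : 0 < T -> measurable_fun `[0, T]%classic f ->
  (forall t, 0 <= t <= T -> 0 <= f t <= c) -> (avg_int T f <= c%:E)%E.
Proof.
move=> T_gt0 mf f_bnd; rewrite -(avg_int_cst c T_gt0) /avg_int.
apply: lee_wpmul2l; first by rewrite lee_fin invr_ge0 ltW.
apply: ge0_le_integral => //.
- by move=> t; rewrite /= in_itv /= => /f_bnd /andP[].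
- exact/measurable_EFinP.
- by move=> t; rewrite /= in_itv /= => /f_bnd /andP[_]; rewrite lee_fin.
Qed.

Lemma avg_int_scale_indic T c (A : set R) : 0 <= c -> measurable A ->
  avg_int T (fun t => c * \1_A t) =
  ((T^-1 * c)%:E * lebesgue_measure (A `&` `[0%R, T]%classic))%E.
Proof.
move=> c_ge0 mA; rewrite /avg_int EFinM -muleA.
have /= -> // := @integralZl_indic _ _ _ lebesgue_measure _
  (measurable_itv `[0, T]) (fun=> A) c.
- by rewrite integral_indic.
- by move=> /(le_lt_trans c_ge0); rewrite ltxx.
Qed.

Lemma lebesgue_measure_before_setI (s T : R) : 0 <= s <= T ->
  lebesgue_measure (`]-oo, s[%classic `&` `[0, T]%classic) = s%:E.
Proof.
move=> /andP[s_ge0 sT].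
have -> : `]-oo, s[%classic `&` `[0, T]%classic = `[0, s[%classic :> set R.
  apply/seteqP; split => t /=; rewrite !in_itv /=.
    by case=> ts /andP[t_ge0 _]; rewrite t_ge0 ts.
  by case/andP=> t_ge0 ts; rewrite t_ge0 ts (ltW (lt_le_trans ts sT)).
rewrite lebesgue_measure_itv /= lte_fin sube0.
case: ltP => // s_le0.
by have -> : s = 0 by apply/eqP; rewrite eq_le s_le0 s_ge0.
Qed.

Lemma lebesgue_measure_after_setI (s T : R) : 0 <= s <= T ->
  lebesgue_measure (`[s, +oo[%classic `&` `[0, T]%classic) = (T - s)%:E.
Proof.
move=> /andP[s_ge0 sT].
have -> : `[s, +oo[%classic `&` `[0, T]%classic = `[s, T]%classic :> set R.
  apply/seteqP; split => t /=; rewrite !in_itv /= andbT.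
    by case=> st /andP[_ tT]; rewrite st tT.
  by case/andP=> st tT; rewrite st tT (le_trans s_ge0 st).
rewrite lebesgue_measure_itv /= lte_fin -EFinD.
case: ltP => // Ts; suff -> : T = s by rewrite subrr.
by apply/eqP; rewrite eq_le sT Ts.
Qed.

End TimeAverage.

Lemma measurable_sum_rate (R : realType) (beta0 H a b T : R) (x p1 p2 : R -> R) :
  0 < H -> measurable_fun `[0, T]%classic x ->
  measurable_fun `[0, T]%classic p1 -> measurable_fun `[0, T]%classic p2 ->
  measurable_fun `[0, T]%classic
    (fun t => log2 (1 + p1 t * gain beta0 H a (x t) + p2 t * gain beta0 H b (x t))).
Proof.
move=> H_gt0 mx mp1 mp2.
have mg c : measurable_fun `[0, T]%classic (fun t => gain beta0 H c (x t)).
  exact: measurableT_comp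
    (continuous_measurable_fun (@continuous_gain _ beta0 H c H_gt0)) mx.
apply: measurable_log2; apply: measurable_funD; last exact: measurable_funM.
by apply: measurable_funD; [exact: measurable_cst | exact: measurable_funM].
Qed.

Definition rate_triangle (R : realType) (c : R) : set (R * R) :=
  [set r | r.1 + r.2 <= c /\ 0 <= r.1 /\ 0 <= r.2].

Lemma capacity_region_sub_triangle (R : realType) (D H beta0 Pbar T : R) :
  0 < H -> 0 <= beta0 -> 0 < T ->
  capacity_region D H beta0 Pbar T `<=`
  rate_triangle (log2 (1 + Pbar * beta0 / H ^+ 2)).
Proof.
move=> H_gt0 beta0_ge0 T_gt0 [r1 r2]
  [x [p1 [p2 [mx [[mp1 [mp2 p_ok]] [r1_ge0 [r2_ge0 [_ [_ sum_le]]]]]]]]].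
split => //; rewrite -lee_fin (le_trans sum_le) // avg_int_le_cst //.
  exact: measurable_sum_rate.
move=> t /p_ok [p1_ge0 [p2_ge0 p12_le]]; rewrite -mulrA.
by apply: log2_sum_rate_le => //; exact: gain_bounds.
Qed.

Section Switching.
Variables (R : realType) (D H beta0 Pbar T s : R).

Definition switch_traj (t : R) : R := - D / 2 + D * \1_(`[s, +oo[%classic) t.
Definition switch_power1 (t : R) : R := Pbar * \1_(`]-oo, s[%classic) t.
Definition switch_power2 (t : R) : R := Pbar * \1_(`[s, +oo[%classic) t.

Let C := log2 (1 + Pbar * beta0 / H ^+ 2).

Let indic_before t : \1_(`]-oo, s[%classic) t = ((t < s)%R)%:R :> R.
Proof. by rewrite indicE mem_setE in_itv. Qed.

Let indic_after t : \1_(`[s, +oo[%classic) t = ((s <= t)%R)%:R :> R.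
Proof. by rewrite indicE mem_setE in_itv /= andbT. Qed.

Lemma switch_trajE t : switch_traj t = if t < s then - D / 2 else D / 2.
Proof. by rewrite /switch_traj indic_after; case: ltP => _ /=; lra. Qed.

Lemma switch_power1E t : switch_power1 t = if t < s then Pbar else 0.
Proof. by rewrite /switch_power1 indic_before; case: ltP => _ /=; lra. Qed.

Lemma switch_power2E t : switch_power2 t = if t < s then 0 else Pbar.
Proof. by rewrite /switch_power2 indic_after; case: ltP => _ /=; lra. Qed.

Lemma switch_rate1 t :
  log2 (1 + switch_power1 t * gain beta0 H (- D / 2) (switch_traj t)) =
  C * \1_(`]-oo, s[%classic) t.
Proof.
rewrite switch_power1E switch_trajE indic_before.
case: ltP => _ /=; first by rewrite gain_at_user mulrA mulr1.
by rewrite mul0r addr0 log2_1 mulr0.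
Qed.

Lemma switch_rate2 t :
  log2 (1 + switch_power2 t * gain beta0 H (D / 2) (switch_traj t)) =
  C * \1_(`[s, +oo[%classic) t.
Proof.
rewrite switch_power2E switch_trajE indic_after.
case: ltP => _ /=; first by rewrite mul0r addr0 log2_1 mulr0.
by rewrite gain_at_user mulrA mulr1.
Qed.

Lemma switch_sum_rate t :
  log2 (1 + switch_power1 t * gain beta0 H (- D / 2) (switch_traj t)
          + switch_power2 t * gain beta0 H (D / 2) (switch_traj t)) = C.
Proof.
rewrite switch_power1E switch_power2E switch_trajE.
by case: ltP => _; rewrite !mul0r ?addr0 gain_at_user mulrA.
Qed.

Lemma measurable_switch_traj : measurable_fun `[0, T]%classic switch_traj.
Proof.
apply: measurable_funD; first exact: measurable_cst.
by apply: measurable_funM; [exact: measurable_cst | exact: measurable_indic].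
Qed.

Lemma power_alloc_switch :
  0 <= Pbar -> power_alloc Pbar T switch_power1 switch_power2.
Proof.
move=> Pbar_ge0; split; last split.
- by apply: measurable_funM; [exact: measurable_cst | exact: measurable_indic].
- by apply: measurable_funM; [exact: measurable_cst | exact: measurable_indic].
by move=> t _; rewrite switch_power1E switch_power2E; case: ltP => _; lra.
Qed.

Hypotheses (Pbar_ge0 : 0 <= Pbar) (beta0_ge0 : 0 <= beta0) (T_gt0 : 0 < T).
Hypothesis s_bnd : 0 <= s <= T.

Lemma switch_rate_region (r : R * R) :
  0 <= r.1 <= T^-1 * C * s -> 0 <= r.2 <= T^-1 * C * (T - s) ->
  rate_region D H beta0 T switch_traj switch_power1 switch_power2 r.
Proof.
case: r => r1 r2 /= /andP[r1_ge0 r1_le] /andP[r2_ge0 r2_le].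
have C_ge0 : 0 <= C.
  by apply: log2_ge0; rewrite lerDl divr_ge0 ?sqr_ge0 ?mulr_ge0.
split; [done | split; [done | split; [|split]]].
- rewrite (eq_avg_int _ switch_rate1) avg_int_scale_indic //.
  by rewrite lebesgue_measure_before_setI // -EFinM lee_fin.
- rewrite (eq_avg_int _ switch_rate2) avg_int_scale_indic //.
  by rewrite lebesgue_measure_after_setI // -EFinM lee_fin.
- rewrite (eq_avg_int _ switch_sum_rate) avg_int_cst // lee_fin.
  have sum_eq : T^-1 * C * s + T^-1 * C * (T - s) = C.
    by field; rewrite gt_eqF.
  by rewrite /= -sum_eq lerD.
Qed.

End Switching.

Lemma triangle_sub_capacity_region (R : realType) (D H beta0 Pbar T : R) :
  0 < H -> 0 < beta0 -> 0 < Pbar -> 0 < T ->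
  rate_triangle (log2 (1 + Pbar * beta0 / H ^+ 2)) `<=`
  capacity_region D H beta0 Pbar T.
Proof.
move=> H_gt0 beta0_gt0 Pbar_gt0 T_gt0 [r1 r2] [/= sum_le [/= r1_ge0 r2_ge0]].
set C := log2 _ in sum_le *.
have C_gt0 : 0 < C.
  by apply: log2_gt0; rewrite ltrDl divr_gt0 ?mulr_gt0 ?exprn_gt0.
pose s := r1 / C * T.
have s_bnd : 0 <= s <= T.
  have r1C_le1 : r1 / C <= 1 by rewrite ler_pdivrMr // mul1r; lra.
  apply/andP; split; last exact: ler_piMl (ltW T_gt0) r1C_le1.
  exact: mulr_ge0 (divr_ge0 r1_ge0 (ltW C_gt0)) (ltW T_gt0).
have [rate1 rate2] : T^-1 * C * s = r1 /\ T^-1 * C * (T - s) = C - r1.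
  by rewrite /s; move: (C) C_gt0 => c c_gt0; split; field; rewrite !gt_eqF.
exists (switch_traj D s), (switch_power1 Pbar s), (switch_power2 Pbar s).
split; first exact: measurable_switch_traj.
split; first exact/power_alloc_switch/ltW.
apply: switch_rate_region; rewrite -/C //=.
- exact: ltW.
- exact: ltW.
- by rewrite r1_ge0 rate1 lexx.
- by rewrite r2_ge0 rate2 lerBrDl.
Qed.

Theorem proposition1 (R : realType) (D H beta0 Pbar T : R) :
  0 < D -> 0 < H -> 0 < beta0 -> 0 < Pbar -> 0 < T ->
  capacity_region D H beta0 Pbar T =
  [set r : R * R | r.1 + r.2 <= log2 (1 + Pbar * beta0 / H ^+ 2) /\
                   0 <= r.1 /\ 0 <= r.2].
Proof.
move=> _ H_gt0 beta0_gt0 Pbar_gt0 T_gt0; apply/seteqP; split.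
- exact: capacity_region_sub_triangle (ltW beta0_gt0) T_gt0.
- exact: triangle_sub_capacity_region.
Qed.
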